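(* Let $n\ge4$ be even, $p\ge n+1$ an integer, $c_1$ a positive integer, $a_k=pc_k$, $c_{k+1}=p^2c_k$, and let $T$, $I^{(j)}$, $I^{(j)}_i$ and $\lambda_k$ be as in the context. Then for every odd $k$ with $3\le k\le n-1$ and every $j\ge1$: (1) $\dfrac{\lambda_k(I^{(j)}_k)}{\lambda_k(I^{(j)})}>\dfrac12$; (2) $\dfrac{\lambda_k\bigl(\bigcup_{2\le i\le n-1,\ i\ne k}I^{(j)}_i\bigr)}{\lambda_k(I^{(j)})}<\dfrac{n}{2c_j}$.
   Context: $\pi$ is the permutation of $\{1,\dots,n\}$ with top row $1,2,\dots,n$ and bottom row $n,3,2,5,4,\dots,n-1,n-2,1$. Right Rauzy induction: step ''0'' when the rightmost domain (top) interval is longer, ''1'' when the rightmost image (bottom) interval is longer. For $a,c>0$, $\dot\gamma_{m,a}=1^{n-1-m}0^a10^2$, $\gamma_{a,c}=0\,\dot\gamma_{n-2,a}\cdots\dot\gamma_{2,a}\,1^{c(n-1)}$; its transition matrix $\Theta_{a,c}$ (old lengths $=\Theta_{a,c}\cdot$new lengths) has row $1=(1,c,\dots,c)$, row $n=(1,c+1,\dots,c+1)$, and for $1\le i\le(n-2)/2$: row $2i$ has $0$ in column 1, $2$ in columns $2i,2i+1$, $1$ in the other columns among $2,\dots,n$; row $2i+1$ has $a$ in column $2i$, $a+1$ in column $2i+1$, $0$ elsewhere. $\Theta_k=\Theta_{a_k,c_k}$. $T$ is an IET of $[0,1)$ with permutation $\pi$ whose right Rauzy induction path is $\gamma_{a_1,c_1}\gamma_{a_2,c_2}\cdots$;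 $I^{(j)}$ is the interval on which the induced map lives after the first $j$ blocks and $I^{(j)}_1,\dots,I^{(j)}_n$ its exchanged subintervals; lengths satisfy $\ell^{(j-1)}=\Theta_j\ell^{(j)}$. For $v\ge0$, $|v|$ is the sum of entries and $\overline v=v/|v|$. $\lambda_k$ denotes the $T$-invariant Borel probability measure such that for every $j\ge0$, $(\lambda_k(I^{(j)}_i))_i$ is a positive multiple of $\lim_{m\to\infty}\overline{\Theta_{j+1}\cdots\Theta_me_k}$. *)

From HB Require Import structures.
From mathcomp Require Import all_boot all_order all_algebra.
From mathcomp Require Import all_classical all_reals all_analysis.
Set Implicit Arguments. Unset Strict Implicit. Unset Printing Implicit Defensive.
Import Order.TTheory GRing.Theory Num.Theory.
Import numFieldNormedType.Exports.
Local Open Scope classical_set_scope.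
Local Open Scope ring_scope.

Section Defs.
Variable R : realType.
Variable n : nat.

(* Theta_{a,c} with the 1-based description of the paper: entry (r,s) with
   r = i+1, s = j+1. *)
Definition Theta (a c : nat) : 'M[R]_n :=
  \matrix_(i < n, j < n)
    (let r := i.+1 in let s := j.+1 in
     if r == 1%N then (if s == 1%N then 1 else c%:R)
     else if r == n then (if s == 1%N then 1 else (c + 1)%:R)
     else if odd r then
       (if s == r.-1 then a%:R else if s == r then (a + 1)%:R else 0)
     else
       (if s == 1%N then 0 else if (s == r) || (s == r.+1) then 2 else 1)).

Definition cseq (c1 p j : nat) : nat := (c1 * p ^ (2 * j.-1))%N.
Definition aseq (c1 p j : nat) : nat := (p * cseq c1 p j)%N.

Definition ThetaK (c1 p j : nat) : 'M[R]_n := Theta (aseq c1 p j) (cseq c1 p j).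

Definition prodTheta (c1 p j m : nat) : 'M[R]_n :=
  foldr (fun l M => ThetaK c1 p l *m M) 1%:M (iota j.+1 (m - j)).

Definition vsum (v : 'cV[R]_n) : R := \sum_(i < n) v i 0.
Definition vnormalize (v : 'cV[R]_n) : 'cV[R]_n := (vsum v)^-1 *: v.

End Defs.

(* Write u for the k-th column of Theta_(j+1) ... Theta_m.  The invariant is:
   u >= 0, its k-th entry carries at least 51% of its mass |u|, and every other
   inner entry is at most B |u|.  Multiplying by Theta_(a,c) with a = p c scales
   the k-th entry by a + 1, whereas every other row adds only O(c + n) |u|:
   the first and last rows have entries <= c + 1, even rows entries <= 2, and an
   odd row only sees two inner neighbours, both different from k by parity and
   both <= B |u| with (a + 1) B <= 1.  Hence the k-th share stays above 51% and
   the other inner entries drop to <= |v| / c.  As c_(j+1) = p^2 c_j, starting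
   from e_k the invariant holds for every m with B = 1 / (p^2 c_j).  It passes
   to the normalized limit, which is proportional to i |-> lambda_k(I^(j)_i):
   the k-th share is >= 51%, the other inner ones total <= n / (p^2 c_j). *)

From HB Require Import structures.
From mathcomp Require Import all_boot all_order all_algebra.
From mathcomp Require Import all_classical all_reals all_analysis.
From mathcomp Require Import zify ring lra.
Import Order.TTheory GRing.Theory Num.Theory.
Import numFieldNormedType.Exports.
Local Open Scope classical_set_scope.
Local Open Scope ring_scope.
Set Implicit Arguments. Unset Strict Implicit.

Definition inner_index n (i : 'I_n) : bool := (2 <= i.+1 <= n - 1)%N.

Section ThetaEntries.
Variables (R : realType) (n a c : nat).
Local Notation Th := (Theta R n a c).

Lemma Theta_ge0 i s : 0 <= Th i s.
Proof. by rewrite mxE /=; repeat case: ifP => _; rewrite ?ler0n ?ler01. Qed.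

Lemma Theta_boundary_le (i s : 'I_n) :
  (i == 0 :> nat) || (i.+1 == n) -> Th i s <= (c + 1)%:R.
Proof.
rewrite mxE /= eqSS; case: (i == 0 :> nat) => /= [_|->].
  by case: ifP => _; rewrite ?ler1n ?ler_nat ?addn1.
by case: ifP => _; rewrite ?ler1n ?addn1.
Qed.

Lemma Theta_even_row_le (i s : 'I_n) :
  inner_index i -> ~~ odd i.+1 -> Th i s <= 2.
Proof.
move=> /andP[i2 iN] /= /negPn iodd; rewrite mxE /= ifF; last by apply/eqP; lia.
rewrite ifF; last by apply/eqP; lia.
by rewrite iodd; repeat case: ifP => _; rewrite ?ler0n ?ler1n.
Qed.

Lemma Theta_odd_row (i s : 'I_n) : inner_index i -> odd i.+1 ->
  Th i s = if s.+1 == i then a%:R else if s == i :> nat then (a + 1)%:R else 0.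
Proof.
move=> /andP[i2 iN] /= iodd; rewrite mxE /= ifF; last by apply/eqP; lia.
by rewrite ifF ?iodd ?eqSS //; apply/eqP; lia.
Qed.

End ThetaEntries.

Section NonnegMulmx.
Variables (R : realType) (n : nat) (A : 'M[R]_n) (u : 'cV[R]_n).
Hypotheses (A_ge0 : forall i j, 0 <= A i j) (u_ge0 : forall i, 0 <= u i 0).

Lemma vsum_ge_entry i : u i 0 <= vsum u.
Proof. by rewrite /vsum (bigD1 i) //= lerDl sumr_ge0. Qed.

Lemma mulmx_nonneg_ge0 i : 0 <= (A *m u) i 0.
Proof. by rewrite mxE sumr_ge0 // => s _; rewrite mulr_ge0. Qed.

Lemma mulmx_nonneg_le_row i b : (forall s, A i s <= b) -> (A *m u) i 0 <= b * vsum u.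
Proof.
by move=> Ab; rewrite mxE /vsum mulr_sumr ler_sum // => s _; rewrite ler_wpM2r.
Qed.

Lemma mulmx_nonneg_ge_diag i : A i i * u i 0 <= (A *m u) i 0.
Proof.
by rewrite [leRHS]mxE (bigD1 i) //= lerDl sumr_ge0 // => s _; rewrite mulr_ge0.
Qed.

End NonnegMulmx.

Lemma Theta_mulmx_odd_row (R : realType) n a c (u : 'cV[R]_n) (i i' : 'I_n) :
  inner_index i -> odd i.+1 -> i'.+1 = i ->
  (Theta R n a c *m u) i 0 = a%:R * u i' 0 + (a + 1)%:R * u i 0.
Proof.
move=> iin iodd ii'.
have i'i : i' != i by rewrite -val_eqE /= -ii' neq_ltn ltnSn.
rewrite mxE (bigD1 i) //= (bigD1 i') //= big1 => [|s /andP[si si']].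
  by rewrite !Theta_odd_row // ii' eqxx gtn_eqF // addr0 addrC.
rewrite Theta_odd_row // ifF ?ifF ?mul0r //; first exact: negbTE.
by apply: contraNF si' => /eqP sSi; apply/eqP/val_inj/eqP; rewrite -eqSS ii' sSi.
Qed.

Lemma sum_ord_le_card_mul (R : numDomainType) n (P : pred 'I_n) (f : 'I_n -> R) M :
  0 <= M -> (forall i, P i -> f i <= M) -> \sum_(i | P i) f i <= n%:R * M.
Proof.
move=> M_ge0 fM; apply: le_trans (ler_sum _ fM) _.
rewrite sumr_const mulr_natl; apply: ler_wpMn2l => //.
by rewrite -[leqRHS]card_ord max_card.
Qed.

Definition concentrated (R : realType) n (k : 'I_n) (beta B : R) (u : 'cV[R]_n) :=
  [/\ forall i, 0 <= u i 0, 0 < u k 0, beta * vsum u <= u k 0 &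
      forall i, inner_index i -> i != k -> u i 0 <= B * vsum u].

Section ThetaStep.
Variables (R : realType) (n a c : nat) (k : 'I_n) (beta B : R) (u : 'cV[R]_n).
Hypotheses (k_inner : inner_index k) (k_odd : odd k.+1).
Hypotheses (u_conc : concentrated k beta B u) (aB_le1 : (a + 1)%:R * B <= 1).
Local Notation v := (Theta R n a c *m u).

Lemma Theta_mulmx_inner_le i : inner_index i -> i != k -> v i 0 <= 2 * vsum u.
Proof.
case: u_conc => u_ge0 _ _ uB iin ik.
case iodd: (odd i.+1); last first.
  by apply: mulmx_nonneg_le_row => // s; rewrite Theta_even_row_le ?iodd.
have i'lt : (i.-1 < n)%N by rewrite (leq_ltn_trans (leq_pred i)).
pose i' := Ordinal i'lt.
have ii' : i'.+1 = i by move: iin iodd; rewrite /inner_index /=; case: (nat_of_ord i).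
have i'in : inner_index i' by move: iin iodd; rewrite /inner_index /=; lia.
have i'k : i' != k.
  by apply: contraTneq iodd => i'E; rewrite -ii' i'E oddS k_odd.
rewrite (Theta_mulmx_odd_row _ _ _ iin iodd ii').
have u_ge0_sum : 0 <= vsum u := le_trans (u_ge0 i) (vsum_ge_entry u_ge0 i).
have a1_ge0 : 0 <= (a + 1)%:R :> R by [].
have := ler_wpM2l a1_ge0 (lerD (uB _ i'in i'k) (uB _ iin ik)).
have := ler_wpM2r u_ge0_sum aB_le1; have := u_ge0 i'; rewrite natrD; nra.
Qed.

Lemma Theta_mulmx_vsum_le : vsum v <= v k 0 + (2 * c + 2 + 2 * n)%N%:R * vsum u.
Proof.
have [u_ge0 _ _ _] := u_conc.
have /andP[k2 kN] := k_inner.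
have n_gt0 : (0 < n)%N by lia.
have n1_lt : (n.-1 < n)%N by lia.
pose i0 := Ordinal n_gt0; pose il := Ordinal n1_lt.
have i0k : i0 != k by rewrite -val_eqE /=; apply/eqP; lia.
have ilk : il != k by rewrite -val_eqE /=; apply/eqP; lia.
have ili0 : il != i0 by rewrite -val_eqE /=; apply/eqP; lia.
have boundary_le (i : 'I_n) : (i == 0 :> nat) || (i.+1 == n) -> v i 0 <= (c + 1)%:R * vsum u.
  by move=> ib; apply: mulmx_nonneg_le_row => // s; apply: Theta_boundary_le.
have rest_le : \sum_(i | (i != k) && (i != i0) && (i != il)) v i 0 <= n%:R * (2 * vsum u).
  apply: sum_ord_le_card_mul => [|i /andP[/andP[ik ii0] iil]].
    by rewrite mulr_ge0 // (le_trans (u_ge0 k)) ?vsum_ge_entry.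
  apply: Theta_mulmx_inner_le => //; move: ii0 iil; rewrite -!val_eqE /= /inner_index.
  by move: (ltn_ord i); lia.
rewrite [vsum v]/vsum (bigD1 k) //= (bigD1 i0) //= (bigD1 il) /=; last by rewrite ili0 ilk.
rewrite lerD2l.
have -> : (2 * c + 2 + 2 * n)%N%:R * vsum u =
    (c + 1)%:R * vsum u + ((c + 1)%:R * vsum u + n%:R * (2 * vsum u)).
  by rewrite 2!natrD 2!natrM !natrD; ring.
rewrite lerD ?boundary_le //= ?eqxx // lerD ?boundary_le // /=.
by rewrite prednK ?eqxx ?orbT.
Qed.

Lemma Theta_mulmx_concentrated : (0 < c)%N ->
  (2 * c + 2 + 2 * n)%N%:R <= (1 - beta) * (a + 1)%:R ->
  2 * c%:R <= beta * (a + 1)%:R ->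
  concentrated k beta c%:R^-1 v.
Proof.
move=> c_gt0 mass_le peak_le.
have [u_ge0 uk_gt0 uk_ge _] := u_conc.
have v_ge0 i : 0 <= v i 0 by apply: mulmx_nonneg_ge0 => // ? ?; apply: Theta_ge0.
have vk_ge : (a + 1)%:R * u k 0 <= v k 0.
  have := mulmx_nonneg_ge_diag (@Theta_ge0 R n a c) u_ge0 k.
  by rewrite Theta_odd_row // gtn_eqF // eqxx.
have vk_le : v k 0 <= vsum v := vsum_ge_entry v_ge0 k.
have usum_gt0 : 0 < vsum u := lt_le_trans uk_gt0 (vsum_ge_entry u_ge0 k).
have cR_gt0 : 0 < c%:R :> R by rewrite ltr0n.
have a1_gt0 : 0 < (a + 1)%:R :> R by rewrite ltr0n addn1.
have beta_gt0 : 0 < beta.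
  by rewrite -(pmulr_lgt0 _ a1_gt0) (lt_le_trans _ peak_le) ?mulr_gt0.
have vk_ge_usum : beta * (a + 1)%:R * vsum u <= v k 0.
  by rewrite -mulrA mulrCA (le_trans (ler_wpM2l (ltW a1_gt0) uk_ge)).
split=> //.
- by rewrite (lt_le_trans _ vk_ge) // mulr_gt0.
- have beta_le1 : 0 <= 1 - beta by rewrite -(pmulr_lge0 _ a1_gt0) (le_trans _ mass_le).
  have := ler_wpM2l (ltW beta_gt0) Theta_mulmx_vsum_le.
  have := ler_wpM2r (ltW usum_gt0) mass_le.
  have := ler_wpM2l beta_le1 vk_ge_usum.
  nra.
- move=> i iin ik; rewrite mulrC ler_pdivlMr //.
  have := ler_wpM2r (ltW usum_gt0) peak_le.
  have := ler_wpM2r (ltW cR_gt0) (Theta_mulmx_inner_le iin ik).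
  nra.
Qed.

End ThetaStep.

Lemma concentrated_unit_vector (R : realType) n (k : 'I_n) (beta B : R) :
  beta <= 1 -> 0 <= B -> concentrated k beta B (col k 1%:M).
Proof.
move=> beta_le1 B_ge0.
have e_entry i : col k (1%:M : 'M[R]_n) i 0 = (i == k)%:R by rewrite !mxE.
have e_sum : vsum (col k (1%:M : 'M[R]_n)) = 1.
  by rewrite /vsum (bigD1 k) //= e_entry eqxx big1 ?addr0 // => i /negbTE ik; rewrite e_entry ik.
split=> [i|||i _ ik]; rewrite ?e_sum ?e_entry ?eqxx ?mulr1 //.
by rewrite (negbTE ik).
Qed.

Lemma cseqS c1 p j : (0 < j)%N -> cseq c1 p j.+1 = (p ^ 2 * cseq c1 p j)%N.
Proof. by case: j => // j _; rewrite /cseq mulnS expnD mulnCA. Qed.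

Lemma cseq_gt0 c1 p j : (0 < c1)%N -> (0 < p)%N -> (0 < cseq c1 p j)%N.
Proof. by move=> c1_gt0 p_gt0; rewrite muln_gt0 c1_gt0 expn_gt0 p_gt0. Qed.

Lemma prodTheta_id (R : realType) n c1 p j m :
  (m <= j)%N -> prodTheta R n c1 p j m = 1%:M.
Proof. by rewrite /prodTheta -subn_eq0 => /eqP ->. Qed.

Lemma prodTheta_cons (R : realType) n c1 p j m : (j < m)%N ->
  prodTheta R n c1 p j m = ThetaK R n c1 p j.+1 *m prodTheta R n c1 p j.+1 m.
Proof. by rewrite /prodTheta subnS -subn_gt0; case: (m - j)%N. Qed.

Lemma Theta_step_conditions (R : realType) n p C :
  (4 <= n)%N -> (n + 1 <= p)%N -> (p ^ 2 <= C)%N ->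
  [/\ ((p * C)%N + 1)%:R * (p ^ 2 * C)%N%:R^-1 <= 1 :> R,
      (2 * C + 2 + 2 * n)%N%:R <= (1 - 51 / 100) * ((p * C)%N + 1)%:R :> R &
      2 * C%:R <= 51 / 100 * ((p * C)%N + 1)%:R :> R].
Proof.
move=> n_ge4 p_ge C_ge.
have C_gt0 : (0 < p ^ 2 * C)%N by nia.
split.
- by rewrite ler_pdivrMr ?ltr0n // mul1r ler_nat; nia.
- have : (100 * (2 * C + 2 + 2 * n) <= 49 * (p * C + 1))%N by nia.
  by rewrite -(ler_nat R) !natrM !natrD; lra.
- have : (200 * C <= 51 * (p * C + 1))%N by nia.
  by rewrite -(ler_nat R) !natrM !natrD; lra.
Qed.

Lemma prodTheta_concentrated (R : realType) n p c1 (k : 'I_n) j m :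
  (4 <= n)%N -> (n + 1 <= p)%N -> (0 < c1)%N ->
  inner_index k -> odd k.+1 -> (0 < j)%N ->
  concentrated k (51 / 100) (p ^ 2 * cseq c1 p j)%N%:R^-1
    (col k (prodTheta R n c1 p j m)).
Proof.
move=> n_ge4 p_ge c1_gt0 k_inner k_odd.
have p_gt0 : (0 < p)%N by lia.
have [d] := ubnP (m - j)%N; elim: d j => // d IH j mj j_gt0.
have [jm|mj'] := leqP m j.
  by rewrite prodTheta_id //; apply: concentrated_unit_vector; rewrite ?invr_ge0 //; lra.
rewrite prodTheta_cons // colE -mulmxA -colE /ThetaK /aseq -cseqS //.
have C_ge : (p ^ 2 <= cseq c1 p j.+1)%N.
  by rewrite cseqS // leq_pmulr ?cseq_gt0.
have [aB_le1 mass_le peak_le] := Theta_step_conditions R n_ge4 p_ge C_ge.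
by apply: Theta_mulmx_concentrated (IH _ _ _) _ _ _ _ => //; [lia | exact: cseq_gt0].
Qed.

Lemma vnormalize_concentrated (R : realType) n (k : 'I_n) (beta B : R) u :
  concentrated k beta B u ->
  [/\ vsum (vnormalize u) = 1, beta <= vnormalize u k 0 &
      forall i, inner_index i -> i != k -> vnormalize u i 0 <= B].
Proof.
case=> u_ge0 uk_gt0 uk_ge u_inner.
have usum_gt0 : 0 < vsum u := lt_le_trans uk_gt0 (vsum_ge_entry u_ge0 k).
have wE i : vnormalize u i 0 = (vsum u)^-1 * u i 0 by rewrite mxE.
split=> [|| i iin ik]; rewrite ?wE.
- by rewrite /vsum; under eq_bigr do rewrite wE; rewrite -mulr_sumr mulVf ?gt_eqF.
- by rewrite mulrC ler_pdivlMr.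
- by rewrite mulrC ler_pdivrMr ?u_inner.
Qed.

Lemma concentrated_limit (R : realType) n (k : 'I_n) (beta B : R)
    (v : nat -> 'cV[R]_n) (l : 'I_n -> R) :
  (forall m, concentrated k beta B (v m)) ->
  (forall i, (fun m => vnormalize (v m) i 0) @ \oo --> l i) ->
  [/\ \sum_i l i = 1, beta <= l k &
      forall i, inner_index i -> i != k -> l i <= B].
Proof.
move=> v_conc v_cvg.
have w_conc m := vnormalize_concentrated (v_conc m).
have sum_cvg : (fun m => vsum (vnormalize (v m))) @ \oo --> \sum_i l i.
  by apply: (@cvg_big R^o _ +%R 0 xpredT add_continuous _ _ _
    (fun i m => vnormalize (v m) i 0)).
split=> [|| i iin ik].
- have sum1 : (fun m => vsum (vnormalize (v m))) = fun=> 1.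
    by apply/funext => m; case: (w_conc m).
  by rewrite sum1 in sum_cvg; apply: (cvg_unique (@norm_hausdorff _ R^o) sum_cvg); apply: cvg_cst.
- apply: ler_cvg_to (cvg_cst _) (v_cvg k) _; apply: nearW => m.
  by case: (w_conc m).
- apply: ler_cvg_to (v_cvg i) (cvg_cst _) _; apply: nearW => m.
  by case: (w_conc m) => _ _; apply.
Qed.

Lemma fine_measure_bigcup_ord d (T : measurableType d) (R : realType)
    (mu : {measure set T -> \bar R}) n (F : 'I_n -> set T) (f : 'I_n -> R)
    (P : pred 'I_n) :
  (forall i, measurable (F i)) -> trivIset setT F ->
  (forall i, mu (F i) = (f i)%:E) ->
  fine (mu (\bigcup_(i in [set` P]) F i)) = \sum_(i in P) f i.
Proof.
move=> F_meas F_disj muF.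
rewrite bigcup_pred measure_bigsetU_ord //.
by rewrite (eq_bigr (fun i => (f i)%:E)) ?sumEFin // => i _; apply: muF.
Qed.

Lemma ltr_div_pexp2_mul (R : realType) n p c :
  (0 < n)%N -> (2 < p ^ 2)%N -> (0 < c)%N ->
  n%:R * (p ^ 2 * c)%N%:R^-1 < n%:R / (2 * c%:R) :> R.
Proof.
move=> n_gt0 p2_gt2 c_gt0.
have pc_gt0 : (0 < p ^ 2 * c)%N by rewrite muln_gt0 c_gt0 (ltn_trans _ p2_gt2).
rewrite ltr_pM2l ?ltr0n // ltf_pV2 ?posrE ?mulr_gt0 ?ltr0n //.
by rewrite -natrM ltr_nat ltn_pmul2r.
Qed.

Theorem mainTheorem4 (R : realType) (n p c1 : nat)
  (Hn : (4 <= n)%N) (Hneven : ~~ odd n) (Hp : (n + 1 <= p)%N) (Hc1 : (0 < c1)%N)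
  (k : 'I_n) (Hkodd : odd k.+1) (Hk : (3 <= k.+1 <= n - 1)%N)
  (I : nat -> set R) (Isub : nat -> 'I_n -> set R)
  (lam : {measure set R -> \bar R})
  (L : nat -> 'I_n -> R)
  (HImeas : forall j i, measurable (Isub j i))
  (HIdisj : forall j (i i' : 'I_n), i != i' -> Isub j i `&` Isub j i' = set0)
  (HIunion : forall j, I j = \bigcup_(i in [set: 'I_n]) Isub j i)
  (HL : forall j (i : 'I_n),
      (fun m => vnormalize (col k (prodTheta R n c1 p j m)) i 0) @ \oo --> L j i)
  (Hlam : forall j, exists2 t : R, 0 < t &
      forall i, lam (Isub j i) = (t * L j i)%:E) :
  forall j, (1 <= j)%N ->
    1 / 2 < fine (lam (Isub j k)) / fine (lam (I j)) /\
    fine (lam (\bigcup_(i in [set i : 'I_n | (2 <= i.+1 <= n - 1)%N /\ i != k])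
                  Isub j i)) / fine (lam (I j))
      < n%:R / (2 * (cseq c1 p j)%:R).
Proof.
move=> j j_gt0.
have k_inner : inner_index k by rewrite /inner_index; lia.
have [L_sum Lk_ge L_inner] := concentrated_limit
  (fun m => prodTheta_concentrated R m Hn Hp Hc1 k_inner Hkodd j_gt0) (HL j).
have [t t_gt0 lamE] := Hlam j.
have Isub_disj : trivIset setT (Isub j).
  move=> i i' _ _ [x [xi xi']]; apply/eqP/negPn/negP => /(HIdisj j) ii'.
  by rewrite -[False]/(set0 x) -ii'.
have lam_bigcup (P : pred 'I_n) : fine (lam (\bigcup_(i in [set` P]) Isub j i)) =
    t * \sum_(i in P) L j i.
  by rewrite mulr_sumr (fine_measure_bigcup_ord P (HImeas j) Isub_disj lamE).
have lamI : fine (lam (I j)) = t.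
  rewrite HIunion (_ : setT = [set` predT]) ?lam_bigcup; last by apply/seteqP.
  by rewrite -[X in _ = X]mulr1 -L_sum.
have -> : [set i : 'I_n | (2 <= i.+1 <= n - 1)%N /\ i != k] =
    [set` [pred i | inner_index i & i != k]] by apply/seteqP; split=> i /= /andP.
rewrite lamI lamE lam_bigcup /= ![t * _ / t]mulrC !mulKf ?gt_eqF //.
split; first by apply: lt_le_trans Lk_ge; lra.
have n_gt0 : (0 < n)%N by lia.
have p2_gt2 : (2 < p ^ 2)%N by rewrite expnS expn1; nia.
have c_gt0 : (0 < cseq c1 p j)%N by apply: cseq_gt0; lia.
apply: le_lt_trans _ (ltr_div_pexp2_mul R n_gt0 p2_gt2 c_gt0).
by apply: sum_ord_le_card_mul => [|i /andP[]]; [rewrite invr_ge0 | exact: L_inner].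
Qed.
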